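(* For any sheaf $\mathcal F$ of finite-dimensional $\mathbb F$-vector spaces on a digraph $G$, $h_1^{\rm twist}(\mathcal F)\ge{\rm m.e.}(\mathcal F)$.
   Context: A digraph has finite vertex and edge sets with tail/head maps $t_G,h_G$. A sheaf $\mathcal F$ on $G$: finite-dimensional vector spaces $\mathcal F(P)$, $P\in V_G\sqcup E_G$, linear maps $\mathcal F(t,e)\colon\mathcal F(e)\to\mathcal F(t_Ge)$, $\mathcal F(h,e)\colon\mathcal F(e)\to\mathcal F(h_Ge)$; $\mathcal F(V)=\bigoplus_v\mathcal F(v)$, $\mathcal F(E)=\bigoplus_e\mathcal F(e)$; $d_h,d_t\colon\mathcal F(E)\to\mathcal F(V)$ send the summand $\mathcal F(e)$ into $\mathcal F(h_Ge)$ resp. $\mathcal F(t_Ge)$ via the restriction maps, $d=d_h-d_t$, $H_1=\ker d$. Twisting: with independent indeterminates $\psi(e)$, $e\in E_G$, $\mathcal F^\psi$ is the sheaf of $\mathbb F(\psi)$-vector spaces with values $\mathcal F(P)\otimes_{\mathbb F}\mathbb F(\psi)$, head maps $\mathcal F(h,e)$, tail maps $\psi(e)\mathcal F(t,e)$; $h_1^{\rm twist}(\mathcal F)=\dim_{\mathbb F(\psi)}H_1(\mathcal F^\psi)$. For $U\subset\mathcal F(V)$, $\Gamma_{\rm ht}(U)=\bigoplus_e\{w\in\mathcal F(e):d_hw\in U,d_tw\in U\}$, ${\rm excess}(\mathcal F,U)=\dim\Gamma_{\rm ht}(U)-\dim U$, ${\rm m.e.}(\mathcal F)=\max_U{\rm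 excess}(\mathcal F,U)$. *)

From HB Require Import structures.
From mathcomp Require Import all_boot all_order all_algebra.
Set Implicit Arguments. Unset Strict Implicit. Unset Printing Implicit Defensive.
Import Order.TTheory GRing.Theory Num.Theory.
Local Open Scope ring_scope.

(* A digraph with vertex set 'I_nV and edge set 'I_nE (any finite sets, up to
   relabelling), with tail and head maps. *)
Record digraph := Digraph {
  nV : nat; nE : nat;
  tl : 'I_nE -> 'I_nV;
  hd : 'I_nE -> 'I_nV }.

(* A sheaf of finite-dimensional F-vector spaces on G: F(v) = 'rV_(dimV v),
   F(e) = 'rV_(dimE e); restriction maps act on row vectors by right
   multiplication: w |-> w *m resT e  (F(e) -> F(t e)), w |-> w *m resH e. *)
Record sheaf (F : fieldType) (G : digraph) := Sheaf {
  dimV : 'I_(nV G) -> nat;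
  dimE : 'I_(nE G) -> nat;
  resT : forall e, 'M[F]_(dimE e, dimV (tl e));
  resH : forall e, 'M[F]_(dimE e, dimV (hd e)) }.

(* The (e,v) block of the map F(E) -> F(V) induced by the maps M e : F(e) -> F(f e):
   M e if f e = v, and 0 otherwise. *)
Definition blk (R : nzRingType) (nE nV : nat) (dE : 'I_nE -> nat)
  (dV : 'I_nV -> nat) (f : 'I_nE -> 'I_nV)
  (M : forall e, 'M[R]_(dE e, dV (f e))) (e : 'I_nE) (v : 'I_nV)
  : 'M[R]_(dE e, dV v) :=
  match f e =P v with
  | ReflectT pf => castmx (erefl, f_equal dV pf) (M e)
  | ReflectF _ => 0
  end.

Section SheafMaps.
Variables (F : fieldType) (G : digraph) (S : sheaf F G).

Definition NV := (\sum_(v < nV G) dimV S v)%N.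
Definition NE := (\sum_(e < nE G) dimE S e)%N.

(* restriction of d_h, d_t to the summand F(e):  F(e) -> F(V) = (+)_v F(v) *)
Definition dh_e (e : 'I_(nE G)) : 'M[F]_(dimE S e, NV) :=
  \mxrow_(v < nV G) blk (@resH F G S) e v.
Definition dt_e (e : 'I_(nE G)) : 'M[F]_(dimE S e, NV) :=
  \mxrow_(v < nV G) blk (@resT F G S) e v.

(* Gamma_ht(U) restricted to the summand F(e):
   { w in F(e) : d_h w \in U, d_t w \in U } *)
Definition Gamma_e (U : {vspace 'rV[F]_NV}) (e : 'I_(nE G))
  : {vspace 'rV[F]_(dimE S e)} :=
  ((linfun (mulmxr (dh_e e)) @^-1: U) :&: (linfun (mulmxr (dt_e e)) @^-1: U))%VS.

(* dim Gamma_ht(U) = dim of the direct sum over e of Gamma_e(U) *)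
Definition dim_Gamma_ht (U : {vspace 'rV[F]_NV}) : nat :=
  (\sum_(e < nE G) \dim (Gamma_e U e))%N.

Definition excess (U : {vspace 'rV[F]_NV}) : int :=
  (dim_Gamma_ht U)%:Z - (\dim U)%:Z.

End SheafMaps.

(* polyn F n = F[x_0, ..., x_{n-1}] built as iterated univariate polynomials. *)
Fixpoint polyn (F : fieldType) (n : nat) : idomainType :=
  match n with
  | 0 => F
  | m.+1 => ({poly polyn F m} : idomainType)
  end.

Fixpoint pconst (F : fieldType) (n : nat) : F -> polyn F n :=
  match n return F -> polyn F n with
  | 0 => fun a => a
  | m.+1 => fun a => (pconst m a)%:P
  end.

Fixpoint pvar (F : fieldType) (n : nat) : 'I_n -> polyn F n :=
  match n return 'I_n -> polyn F n with
  | 0 => fun i => 0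
  | m.+1 => fun i =>
      match unlift ord_max i with
      | Some j => (@pvar F m j)%:P
      | None => 'X
      end
  end.

Definition ratfun (F : fieldType) (n : nat) : fieldType := {fraction polyn F n}.

Definition rconst (F : fieldType) (n : nat) (a : F) : ratfun F n :=
  tofrac (pconst n a).
Definition rvar (F : fieldType) (n : nat) (i : 'I_n) : ratfun F n :=
  tofrac (pvar F i).

Section Twist.
Variables (F : fieldType) (G : digraph) (S : sheaf F G).

Local Notation K := (ratfun F (nE G)).
Definition psi (e : 'I_(nE G)) : K := rvar F e.

(* F^psi: head maps F(h,e), tail maps psi(e) F(t,e), tensored up to F(psi) *)
Definition twH e : 'M[K]_(dimE S e, dimV S (hd e)) := map_mx (@rconst F _) (resH S e).
Definition twT e : 'M[K]_(dimE S e, dimV S (tl e)) :=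
  psi e *: map_mx (@rconst F _) (resT S e).

Definition d_twist : 'M[K]_(NE S, NV S) :=
  \mxblock_(e < nE G, v < nV G) (blk twH e v - blk twT e v).

Definition d_twist_map : 'rV[K]_(NE S) -> 'rV[K]_(NV S) := mulmxr d_twist.
Definition h1_twist : nat := \dim (lker (linfun d_twist_map)).

End Twist.

From HB Require Import structures.
From mathcomp Require Import all_boot all_order all_algebra.
Import Order.TTheory GRing.Theory Num.Theory.
Local Open Scope ring_scope.
Set Implicit Arguments. Unset Strict Implicit.

(* Write K = F(psi), extend scalars along the constant embedding
   F -> K, and let D : K^(F(E)) -> K^(F(V)) be the twisted coboundary.  For a
   subspace U of F(V), put in block-diagonal position, edge by edge, a square
   matrix C_e whose row space is Gamma_e(U); the block-diagonal matrix C then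
   has rank dim Gamma_ht(U).  A vector w of Gamma_e(U) satisfies
   d w = d_h w - psi(e) d_t w with d_h w, d_t w in U, so the row space of C D
   lies in U (tensored with K), whence rank (C D) <= dim U.  Since
   rank C = rank (C :&: ker D) + rank (C D) and rank (C :&: ker D) is at most
   dim ker D = h_1^twist, we get dim Gamma_ht(U) <= h_1^twist + dim U, i.e.
   excess(F, U) <= h_1^twist.  (The argument uses no property of the
   scalars psi(e) beyond their lying in K.)
   The file first relates subspaces of row vectors to matrices, then makes
   the constant embedding F -> F(psi) a ring morphism, describes the
   twisted coboundary edge by edge, and finally assembles the inequality. *)

Section VspaceMatrix.
Variables (R : fieldType) (n : nat).
Implicit Types (W : {vspace 'rV[R]_n}) (w : 'rV[R]_n).

Definition basis_mx W : 'M[R]_(\dim W, n) := \matrix_(i < \dim W) (vbasis W)`_i.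

Lemma basis_mx_free W : row_free (basis_mx W).
Proof.
apply: inj_row_free => x xB0; have /freeP free_basis := basis_free (vbasisP W).
apply/rowP => i; rewrite mxE; apply: (free_basis (fun j => x 0 j)).
by rewrite -[RHS]xB0 mulmx_sum_row; apply: eq_bigr => j _; rewrite rowK.
Qed.

Definition vspace_mx W : 'M[R]_n := <<basis_mx W>>%MS.

Lemma sub_vspace_mx W w : (w <= vspace_mx W)%MS = (w \in W).
Proof.
rewrite genmxE; apply/idP/idP => [/submxP[x ->] | /coord_vbasis ->].
  rewrite mulmx_sum_row; apply: memv_suml => i _.
  by rewrite rowK memvZ // vbasis_mem // mem_nth // size_tuple.
apply/submxP; exists (\row_i coord (vbasis W) i w); rewrite mulmx_sum_row.
by apply: eq_bigr => i _; rewrite rowK mxE.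
Qed.

Lemma rank_vspace_mx W : \rank (vspace_mx W) = \dim W.
Proof. by rewrite genmxE; apply/eqP; apply: basis_mx_free. Qed.

Lemma mxrank_le_dimv m (M : 'M[R]_(m, n)) W :
  (forall i, row i M \in W) -> (\rank M <= \dim W)%N.
Proof.
move=> rowsW; rewrite -rank_vspace_mx; apply: mxrankS.
by apply/row_subP => i; rewrite sub_vspace_mx.
Qed.

End VspaceMatrix.

(* The constant embeddings F -> F[x_0..x_{n-1}] -> F(x_0..x_{n-1}) are ring
   morphisms; this is what lets ranks and inclusions of row spaces survive
   extension of scalars. *)
Lemma pconstB (F : fieldType) n : zmod_morphism (@pconst F n).
Proof. by elim: n => [|n IH] a b //=; rewrite IH polyCB. Qed.

Lemma pconstM (F : fieldType) n : monoid_morphism (@pconst F n).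
Proof.
elim: n => [|n [IH1 IH2]] //=; split; first by rewrite IH1.
by move=> a b; rewrite IH2 polyCM.
Qed.

Lemma rconstB (F : fieldType) n : zmod_morphism (@rconst F n).
Proof. by move=> a b; rewrite /rconst pconstB rmorphB. Qed.

Lemma rconstM (F : fieldType) n : monoid_morphism (@rconst F n).
Proof.
split; first by rewrite /rconst (pconstM F n).1 rmorph1.
by move=> a b; rewrite /rconst (pconstM F n).2 rmorphM.
Qed.

HB.instance Definition _ (F : fieldType) n :=
  GRing.isZmodMorphism.Build F (ratfun F n) (@rconst F n) (@rconstB F n).
HB.instance Definition _ (F : fieldType) n :=
  GRing.isMonoidMorphism.Build F (ratfun F n) (@rconst F n) (@rconstM F n).

Lemma blk_map (R R' : nzRingType) (g : R -> R') nE nV (dE : 'I_nE -> nat)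
    (dV : 'I_nV -> nat) (t : 'I_nE -> 'I_nV) (M : forall e, 'M[R]_(dE e, dV (t e)))
    e v :
  g 0 = 0 -> blk (fun e => map_mx g (M e)) e v = map_mx g (blk M e v).
Proof.
move=> g0; rewrite /blk; case: eqP => [pf|_]; first by rewrite map_castmx.
by apply/matrixP => i j; rewrite !mxE g0.
Qed.

Lemma blk_scale (R : nzRingType) nE nV (dE : 'I_nE -> nat) (dV : 'I_nV -> nat)
    (t : 'I_nE -> 'I_nV) (c : 'I_nE -> R) (M : forall e, 'M[R]_(dE e, dV (t e)))
    e v :
  blk (fun e => c e *: M e) e v = c e *: blk M e v.
Proof.
rewrite /blk; case: eqP => [pf|_]; last by rewrite scaler0.
by apply/matrixP => i j; rewrite !castmxE !mxE castmxE.
Qed.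

Section TwistedCoboundary.
Variables (F : fieldType) (G : digraph) (S : sheaf F G).
Local Notation K := (ratfun F (nE G)).
Local Notation f := (@rconst F (nE G)).
Local Notation psi := (@psi F G).

Lemma d_twistE :
  d_twist S = \mxcol_e (map_mx f (dh_e S e) - psi e *: map_mx f (dt_e S e)).
Proof.
rewrite /d_twist mxblockEv; apply: eq_mxcol => e.
apply/matrixP => i j; rewrite !mxE /twH /twT blk_scale !blk_map ?rmorph0 //.
by rewrite !mxE.
Qed.

Lemma rank_kermx_d_twist : (\rank (kermx (d_twist S)) <= h1_twist S)%N.
Proof.
apply: mxrank_le_dimv => i; rewrite memv_ker lfunE /=.
by apply/eqP/sub_kermxP; apply: row_sub.
Qed.

Variable U : {vspace 'rV[F]_(NV S)}.

Definition gamma_mx e : 'M[K]_(dimE S e) := map_mx f (vspace_mx (Gamma_e U e)).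
Definition Gamma_mx : 'M[K]_(NE S) := \mxdiag_e gamma_mx e.

Lemma rank_Gamma_mx : \rank Gamma_mx = dim_Gamma_ht U.
Proof.
by rewrite rank_mxdiag; apply: eq_bigr => e _; rewrite mxrank_map rank_vspace_mx.
Qed.

Lemma Gamma_e_twist e w : w \in Gamma_e U e ->
  (map_mx f w *m (map_mx f (dh_e S e) - psi e *: map_mx f (dt_e S e))
     <= map_mx f (vspace_mx U))%MS.
Proof.
rewrite memv_cap -!memv_preim !lfunE /= -!sub_vspace_mx => /andP[wh wt].
rewrite mulmxBr -scalemxAr -!map_mxM -scaleNr.
by rewrite addmx_sub ?scalemx_sub // map_submx.
Qed.

Lemma Gamma_mx_d_twist : (Gamma_mx *m d_twist S <= map_mx f (vspace_mx U))%MS.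
Proof.
rewrite d_twistE mul_mxdiag_mxcol; apply/row_subP => k.
rewrite row_mxcol row_mul /gamma_mx -map_row; apply: Gamma_e_twist.
by rewrite -sub_vspace_mx row_sub.
Qed.

(* dim Gamma_ht(U) = rank (C :&: ker D) + rank (C D) <= h_1^twist + dim U. *)
Lemma dim_Gamma_ht_le : (dim_Gamma_ht U <= h1_twist S + \dim U)%N.
Proof.
rewrite -rank_Gamma_mx -(mxrank_mul_ker Gamma_mx (d_twist S)) addnC leq_add //.
  exact: leq_trans (mxrankS (capmxSr _ _)) rank_kermx_d_twist.
by rewrite -(rank_vspace_mx U) -(mxrank_map f) mxrankS ?Gamma_mx_d_twist.
Qed.

End TwistedCoboundary.

Unset Implicit Arguments.
Theorem lemma1 (F : fieldType) (G : digraph) (S : sheaf F G) :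
  forall U : {vspace 'rV[F]_(NV S)}, excess U <= (h1_twist S)%:Z.
Proof.
move=> U; rewrite /excess lerBlDr -PoszD lez_nat.
exact: dim_Gamma_ht_le.
Qed.
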